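(* Let $a \geq 0$ be a constant. If a function $f:(0,\infty) \to [0,\infty)$ satisfies $$\max\{f(x+y), a\} = \max\{f(x), f(y)\}$$ for all $x,y > 0$, then $f(z) = f(1) \geq a$ for every $z>0$. *)

From Stdlib Require Export Reals.

(* Taking x = y shows f >= a everywhere, so the hypothesis sharpens to
   f (x + y) = max (f x) (f y).  Hence f is nondecreasing and f (2 x) = f x,
   so f (2^n y) = f y; since every x lies below some 2^n y, f x <= f y for all
   x, y > 0, i.e. f is constant. *)
From Stdlib Require Import Reals Lra.
Open Scope R_scope.

Lemma pow2_ge (t : R) : exists n : nat, t <= 2 ^ n.
Proof.
  assert (Hinf : exists n : nat, forall m, (m >= n)%nat -> Rabs (2 ^ m) >= t)
    by (apply Pow_x_infinity; rewrite Rabs_pos_eq; lra).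
  destruct Hinf as [n Hn].
  exists n; specialize (Hn n (le_n n)).
  rewrite Rabs_pos_eq in Hn; [lra | apply pow_le; lra].
Qed.

Section MaxAdditive.

Variables (a : R) (f : R -> R).
Hypothesis hf : forall x y, 0 < x -> 0 < y -> Rmax (f (x + y)) a = Rmax (f x) (f y).

Lemma max_additive_ge (x : R) : 0 < x -> a <= f x.
Proof.
  intros hx; pose proof (hf x x hx hx) as E.
  rewrite (Rmax_left (f x) (f x)) in E by lra; rewrite <- E; apply Rmax_r.
Qed.

Lemma max_additive_add (x y : R) : 0 < x -> 0 < y -> f (x + y) = Rmax (f x) (f y).
Proof.
  intros hx hy; rewrite <- hf by assumption.
  rewrite Rmax_left; [reflexivity |]; apply max_additive_ge; lra.
Qed.

Lemma max_additive_le (x y : R) : 0 < x -> x <= y -> f x <= f y.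
Proof.
  intros hx hxy; destruct (Req_dec x y) as [-> | ne]; [lra |].
  replace y with (x + (y - x)) by ring.
  rewrite max_additive_add by lra; apply Rmax_l.
Qed.

Lemma max_additive_pow2_mul (n : nat) (x : R) : 0 < x -> f (2 ^ n * x) = f x.
Proof.
  revert x; induction n as [| n IH]; intros x hx; simpl; [now rewrite Rmult_1_l |].
  assert (h2n : 0 < 2 ^ n * x) by (apply Rmult_lt_0_compat; [apply pow_lt |]; lra).
  replace (2 * 2 ^ n * x) with (2 ^ n * x + 2 ^ n * x) by ring.
  rewrite max_additive_add, Rmax_left by lra; exact (IH x hx).
Qed.

Lemma max_additive_const_le (x y : R) : 0 < x -> 0 < y -> f x <= f y.
Proof.
  intros hx hy; destruct (pow2_ge (x / y)) as [n Hn].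
  rewrite <- (max_additive_pow2_mul n y hy).
  apply max_additive_le; [exact hx |].
  apply (Rmult_le_compat_r y) in Hn; [| lra].
  unfold Rdiv in Hn; rewrite Rmult_assoc, Rinv_l, Rmult_1_r in Hn; lra.
Qed.

End MaxAdditive.

Theorem lemma2p1 (a : R) (f : R -> R)
  (ha : 0 <= a)
  (hf_nonneg : forall x, 0 < x -> 0 <= f x)
  (hf : forall x y, 0 < x -> 0 < y -> Rmax (f (x + y)) a = Rmax (f x) (f y)) :
  forall z, 0 < z -> f z = f 1 /\ a <= f 1.
Proof.
  intros z hz; split.
  - apply Rle_antisym; apply (max_additive_const_le a); auto; lra.
  - apply (max_additive_ge a f hf); lra.
Qed.
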